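(* Let $F$ be a positive integer, $p\ge 1$, and $n_1<n_2<\cdots<n_p<F$ positive integers with $\gcd\{n_1,\dots,n_p\}\nmid F$. Then $\{n_1,\dots,n_p\}$ is the minimal $\mathrm{Sat}(F)$-system of generators of $\mathrm{Sat}(F)[\{n_1,\dots,n_p\}]$ if and only if $\gcd\{n_1,\dots,n_i\}\neq\gcd\{n_1,\dots,n_{i+1}\}$ for all $i\in\{1,\dots,p-1\}$.
   Context: A numerical semigroup is a subset $S\subseteq\mathbb{N}$ closed under addition, containing $0$, with $\mathbb{N}\setminus S$ finite; its Frobenius number $\mathrm{F}(S)$ is the largest integer not in $S$. For $A\subseteq\mathbb{N}$ and $a\in A$, let $\mathrm{d}_A(a)=\gcd\{x\in A\mid x\le a\}$. A numerical semigroup $S$ is saturated if $s+\mathrm{d}_S(s)\in S$ for all $s\in S\setminus\{0\}$. For a positive integer $F$, $\mathrm{Sat}(F)$ denotes the set of all saturated numerical semigroups $S$ with $\mathrm{F}(S)=F$. Let $\Delta(F+1)=\{0\}\cup\{x\in\mathbb{N}\mid x\ge F+1\}$. A set $X\subseteq\mathbb{N}$ is a $\mathrm{Sat}(F)$-set if $X\cap\Delta(F+1)=\emptyset$ and there exists $S\in\mathrm{Sat}(F)$ with $X\subseteq S$. For a $\mathrm{Sat}(F)$-set $X$, $\mathrm{Sat}(F)[X]$ denotes the intersection of all elements of $\mathrm{Sat}(F)$ containing $X$ (the smallest element of $\mathrm{Sat}(F)$ containing $X$). If $S=\mathrm{Sat}(F)[X]$, $X$ is a $\mathrm{Sat}(F)$-system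 of generators of $S$; it is minimal if $S\neq\mathrm{Sat}(F)[Y]$ for every proper subset $Y\subsetneq X$. Every $S\in\mathrm{Sat}(F)$ has a unique minimal $\mathrm{Sat}(F)$-system of generators. *)

From mathcomp Require Import all_boot.
Set Implicit Arguments. Unset Strict Implicit. Unset Printing Implicit Defensive.

Definition is_numerical_semigroup (S : pred nat) : Prop :=
  S 0 /\ (forall x y, S x -> S y -> S (x + y)) /\
  exists N, forall x, N <= x -> S x.

Definition frobenius_is (S : pred nat) (F : nat) : Prop :=
  ~~ S F /\ forall x, F < x -> S x.

Definition dA (A : pred nat) (a : nat) : nat :=
  \big[gcdn/0]_(0 <= x < a.+1 | A x) x.

Definition saturated (S : pred nat) : Prop :=
  forall s, S s -> s != 0 -> S (s + dA S s).

Definition inSat (F : nat) (S : pred nat) : Prop :=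
  is_numerical_semigroup S /\ saturated S /\ frobenius_is S F.

Definition subsetP (X Y : nat -> Prop) : Prop := forall x, X x -> Y x.

Definition SatSet (F : nat) (X : nat -> Prop) : Prop :=
  (forall x, X x -> x <> 0 /\ x <= F) /\
  exists S, inSat F S /\ subsetP X S.

Definition SatHull (F : nat) (X : nat -> Prop) : nat -> Prop :=
  fun x => forall S : pred nat, inSat F S -> subsetP X S -> S x.

Definition minimal_Sat_system (F : nat) (X : nat -> Prop) : Prop :=
  SatSet F X /\
  forall Y : nat -> Prop, subsetP Y X -> ~ subsetP X Y ->
    ~ (forall x, SatHull F Y x <-> SatHull F X x).

Definition gcd_seq (s : seq nat) : nat := foldr gcdn 0 s.

From Pilot Require Import Defs.
From mathcomp Require Import all_boot.
From Stdlib Require Import Classical ClassicalEpsilon.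
From mathcomp Require Import zify.
Set Implicit Arguments. Unset Strict Implicit.

(* Write n = [:: n_1; ...; n_p] and g_i = gcd {n_1, ..., n_i}.
   - Two facts drive everything.  First, a saturated semigroup S containing
     a nonzero u contains every x >= u divisible by d_S(u) (iterate the
     saturation step s |-> s + d_S(s)).  Second, for any A with
     d_A(F) not dividing F, the set SA F A = {x | F < x or d_A(x) | x} is an
     element of Sat(F) containing A.
   - (=>) If g_i = g_{i+1}, i.e. g_i | n_{i+1}, then by the first fact every
     S in Sat(F) containing n \ {n_{i+1}} already contains n_{i+1}, since
     n_i is in S and d_S(n_i) | g_i.  So n \ {n_{i+1}} generates the same
     element of Sat(F), contradicting minimality.
   - (<=) SA F n witnesses that n is a Sat(F)-set.  If a proper Y ⊊ n
     generated the same element, pick b = n_{j+1} missing from Y; then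
     SA F (n ∩ Y) contains b, so d_{n ∩ Y}(b) | b, whence g_j | b, i.e.
     g_j = g_{j+1}, contradicting the hypothesis. *)

Lemma dA_dvd (A : pred nat) x a : A a -> a <= x -> dA A x %| a.
Proof.
rewrite /dA big_mkcond /=.
elim: x => [|x IH] Aa ax.
  by rewrite leqn0 in ax; move/eqP: ax => ->; rewrite dvdn0.
rewrite big_nat_recr //=.
case: (ltngtP a x.+1) => h.
- exact: dvdn_trans (dvdn_gcdl _ _) (IH Aa _).
- by rewrite ltnNge ax in h.
- by rewrite -h Aa dvdn_gcdr.
Qed.

Lemma dvd_dA (A : pred nat) x d :
  (forall a, A a -> a <= x -> d %| a) -> d %| dA A x.
Proof.
move=> H; rewrite /dA big_nat_cond.
apply: (big_ind (fun g => d %| g)) => //.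
  by move=> g1 g2 h1 h2; rewrite dvdn_gcd h1 h2.
by move=> i /andP[/andP[_ hi] Ai]; apply: H.
Qed.

Lemma dA_mono (A : pred nat) x z : x <= z -> dA A z %| dA A x.
Proof.
by move=> xz; apply: dvd_dA => a Aa ax; apply: dA_dvd Aa (leq_trans ax xz).
Qed.

Lemma gcd_seq_dvd s x : x \in s -> gcd_seq s %| x.
Proof.
elim: s => //= y s IH; rewrite in_cons => /orP[/eqP->|h].
  exact: dvdn_gcdl.
exact: dvdn_trans (dvdn_gcdr _ _) (IH h).
Qed.

Lemma dvd_gcd_seq s d : (forall x, x \in s -> d %| x) -> d %| gcd_seq s.
Proof.
elim: s => [|y s IH] H /=; first exact: dvdn0.
rewrite dvdn_gcd H ?mem_head //=; apply: IH => x hx; apply: H.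
by rewrite in_cons hx orbT.
Qed.

Lemma gcd_seq_rcons s x : gcd_seq (rcons s x) = gcdn (gcd_seq s) x.
Proof. by elim: s => [|y s IH] /=; rewrite ?gcdn0 ?gcd0n // IH gcdnA. Qed.

Lemma gcd_take_succ n j : j < size n ->
  (gcd_seq (take j.+1 n) = gcd_seq (take j n)) <-> gcd_seq (take j n) %| nth 0 n j.
Proof. by move=> jn; rewrite (take_nth 0 jn) gcd_seq_rcons; split=> /gcdn_idPl. Qed.

Section StrictlySorted.
Variable n : seq nat.
Hypothesis n_sorted : sorted ltn n.

Lemma sorted_nth_lt k j : k < size n -> j < size n ->
  (nth 0 n k < nth 0 n j) = (k < j).
Proof.
move=> kn jn; have homo := sorted_ltn_nth ltn_trans 0 n_sorted.
case: (ltngtP k j) => [kj|jk|->]; last exact: ltnn.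
- exact: homo.
- by apply/negbTE; rewrite -leqNgt ltnW //; apply: homo.
Qed.

Lemma mem_take_sorted j a : j < size n ->
  (a \in take j n) = (a \in n) && (a < nth 0 n j).
Proof.
move=> jn; case an: (a \in n); last by apply/negbTE/negP => /mem_take; rewrite an.
by rewrite in_take // -sorted_nth_lt ?index_mem // nth_index.
Qed.

Lemma take_le i x : 0 < i -> i <= size n -> x \in take i n -> x <= nth 0 n i.-1.
Proof.
move=> i0 isz; have ilt : i.-1 < size n by move: i0 isz; clear; lia.
rewrite -(prednK i0) (take_nth 0 ilt) mem_rcons in_cons.
case/orP=> [/eqP-> //|]; rewrite mem_take_sorted // => /andP[_]; exact: ltnW.
Qed.

End StrictlySorted.

(* Saturated semigroups are closed upwards along the divisors d_S(u):
   repeated steps u |-> u + d_S(u) climb from u to any such x (d_S only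
   shrinks along the way, so it keeps dividing x). *)
Lemma saturated_reach (S : pred nat) u x : saturated S ->
  S u -> u != 0 -> u <= x -> dA S u %| x -> S x.
Proof.
move=> Hsat; have [m] := ubnP (x - u); elim: m u => [|m IH] u; first by [].
move=> hm Su u0 ux hd.
have du : dA S u %| u by apply: dA_dvd.
have dpos : 0 < dA S u.
  by rewrite lt0n; apply: contraNneq u0 => d0; rewrite d0 dvd0n in du.
case: (eqVneq u x) => [<- // | ne].
have hux : u < x by rewrite ltn_neqAle ne ux.
have hle : dA S u <= x - u by apply: dvdn_leq; rewrite ?subn_gt0 ?dvdn_sub.
apply: (IH (u + dA S u)).
- by move: hm hle dpos; clear; lia.
- exact: Hsat.
- by rewrite addn_eq0 negb_and u0.
- by move: hle hux; clear; lia.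
- exact: dvdn_trans (dA_mono _ (leq_addr _ _)) hd.
Qed.

Definition SA (F : nat) (A : pred nat) : pred nat :=
  fun x => (F < x) || (dA A x %| x).

Lemma SA_sub F (A : pred nat) a : A a -> SA F A a.
Proof. by move=> Aa; rewrite /SA (dA_dvd Aa (leqnn a)) orbT. Qed.

(* Below F, membership means d_A(x) | x; additivity follows as d_A decreases. *)
Lemma SA_semigroup F (A : pred nat) : is_numerical_semigroup (SA F A).
Proof.
split; first by rewrite /SA dvdn0 orbT.
split; last by exists F.+1 => x hx; rewrite /SA hx.
move=> x y; rewrite /SA; case: (ltnP F (x + y)) => //= hxy.
have [hx hy] : x <= F /\ y <= F by move: hxy; clear; lia.
rewrite ltnNge hx ltnNge hy /= => dx dy.
by rewrite dvdn_add // ?(dvdn_trans _ dx) ?(dvdn_trans _ dy) // dA_mono // ?leq_addr ?leq_addl.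
Qed.

(* d_A(s) divides d_{SA F A}(s) below F, so saturation reduces to d_A | s. *)
Lemma SA_saturated F (A : pred nat) : saturated (SA F A).
Proof.
move=> s; rewrite /SA; case: (ltnP F (s + dA (SA F A) s)) => //= h.
have hs : s <= F by apply: leq_trans h; apply: leq_addr.
rewrite ltnNge hs /= => ds _.
have key : dA A s %| dA (SA F A) s.
  apply: dvd_dA => a; rewrite /SA => /orP[Fa|da] as_.
    by have := leq_trans Fa (leq_trans as_ hs); rewrite ltnn.
  exact: dvdn_trans (dA_mono _ as_) da.
by apply: dvdn_trans (dA_mono _ (leq_addr _ _)) _; rewrite dvdn_add.
Qed.

Lemma SA_inSat F (A : pred nat) : ~~ (dA A F %| F) -> inSat F (SA F A).
Proof.
move=> HF; split; [exact: SA_semigroup | split; first exact: SA_saturated].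
by split=> [|x hx]; rewrite /SA ?ltnn // hx.
Qed.

Lemma SA_inSat_sub F (n : seq nat) (A : pred nat) :
  (forall a, A a -> a \in n) -> ~~ (gcd_seq n %| F) -> inSat F (SA F A).
Proof.
move=> An Hg; apply: SA_inSat; apply: contra Hg => h.
by apply: dvdn_trans h; apply: dvd_dA => a /An /gcd_seq_dvd.
Qed.

(* A classical boolean reflection of a proposition, used to turn a
   Prop-valued generating set into a boolean predicate for d_A. *)
Definition decide_prop (P : Prop) : bool :=
  if excluded_middle_informative P then true else false.

Lemma decide_propP (P : Prop) : reflect P (decide_prop P).
Proof. by rewrite /decide_prop; case: excluded_middle_informative => h; constructor. Qed.

(* If g_i | n_{i+1}, any saturated S containing the other generators
   contains n_{i+1}: reach it from n_i, whose d_S divides g_i. *)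
Lemma redundant_generator (n : seq nat) i (S : pred nat) :
  sorted ltn n -> (forall x, x \in n -> 0 < x) ->
  0 < i < size n -> gcd_seq (take i n) %| nth 0 n i -> saturated S ->
  (forall y, y \in n -> y != nth 0 n i -> S y) -> S (nth 0 n i).
Proof.
move=> Hs Hpos /andP[i0 isz] Hdvd Hsat HS.
have ilt : i.-1 < size n by move: i0 isz; clear; lia.
have ab : nth 0 n i.-1 < nth 0 n i by rewrite sorted_nth_lt //; move: i0; clear; lia.
have an : nth 0 n i.-1 \in n by apply: mem_nth.
apply: (saturated_reach Hsat (u := nth 0 n i.-1)).
- by apply: HS; rewrite // neq_ltn ab.
- by rewrite -lt0n Hpos.
- exact: ltnW.
apply: dvdn_trans Hdvd; apply: dvd_gcd_seq => x hx.
have xa : x <= nth 0 n i.-1 by apply: take_le => //; apply: ltnW.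
apply: (dA_dvd _ xa); apply: HS; first exact: mem_take hx.
by rewrite neq_ltn (leq_ltn_trans xa ab).
Qed.

(* Conversely, if n_{j+1} is not in A ⊆ n but d_A(n_{j+1}) | n_{j+1},
   then g_j | n_{j+1}, since all of A below n_{j+1} lies in the prefix. *)
Lemma gcd_prefix_dvd (n : seq nat) j (A : pred nat) :
  sorted ltn n -> j < size n -> (forall a, A a -> a \in n) -> ~~ A (nth 0 n j) ->
  dA A (nth 0 n j) %| nth 0 n j -> gcd_seq (take j n) %| nth 0 n j.
Proof.
move=> Hs jn An nAb hd; apply: dvdn_trans hd; apply: dvd_dA => a Aa ab.
apply: gcd_seq_dvd; rewrite mem_take_sorted // An //= ltn_neqAle ab andbT.
by apply: contraNneq nAb => <-.
Qed.

Lemma SatHull_eq F (X Y : nat -> Prop) : Defs.subsetP Y X ->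
  (forall S, inSat F S -> Defs.subsetP Y S -> Defs.subsetP X S) ->
  forall x, SatHull F Y x <-> SatHull F X x.
Proof.
move=> YX XY x; split=> hx S HS H; apply: hx => //.
- by move=> y /YX /H.
- exact: XY.
Qed.

(* (=>) A non-strict step g_i = g_{i+1} makes n_{i+1} redundant. *)
Lemma minimal_strict_gcd F (n : seq nat) :
  sorted ltn n -> (forall x, x \in n -> 0 < x) ->
  minimal_Sat_system F (fun x => x \in n) ->
  forall i, 0 < i < size n -> gcd_seq (take i n) <> gcd_seq (take i.+1 n).
Proof.
move=> Hs Hpos [_ Hmin] i /andP[i0 ilt] Heq.
have Hdvd : gcd_seq (take i n) %| nth 0 n i by apply/gcd_take_succ.
have bn : nth 0 n i \in n by apply: mem_nth.
apply: (Hmin (fun x => x \in n /\ x != nth 0 n i)) => [x [] // | H |].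
  by case: (H _ bn); rewrite eqxx.
apply: SatHull_eq => [x [] // | S [_ [Hsat _]] HY y yn].
case: (eqVneq y (nth 0 n i)) => [->|ne]; last exact: HY.
apply: (redundant_generator Hs Hpos _ Hdvd Hsat) => [|z zn zb]; last exact: HY.
by rewrite i0.
Qed.

(* (<=) When all steps are strict, a generator b missing from Y ⊆ n is
   not in Sat(F)[Y]: the element SA F (n ∩ Y) of Sat(F) avoids it. *)
Lemma missing_generator_outside_hull F (n : seq nat) (Y : nat -> Prop) b :
  sorted ltn n -> (forall x, x \in n -> 0 < x /\ x < F) -> ~~ (gcd_seq n %| F) ->
  (forall i, 0 < i < size n -> gcd_seq (take i n) <> gcd_seq (take i.+1 n)) ->
  Defs.subsetP Y (fun x => x \in n) -> b \in n -> ~ Y b -> ~ SatHull F Y b.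
Proof.
move=> Hs Hn Hg Hstr HYX bn nYb HYb.
pose A : pred nat := fun x => (x \in n) && decide_prop (Y x).
have An a : A a -> a \in n by rewrite /A => /andP[].
have AY : ~~ A b by rewrite /A; case: decide_propP; rewrite ?andbF.
have YA : Defs.subsetP Y (SA F A).
  by move=> x hx; apply: SA_sub; rewrite /A HYX //; apply/decide_propP.
have := HYb _ (SA_inSat_sub An Hg) YA.
rewrite /SA ltnNge (ltnW (proj2 (Hn b bn))) /= => hd.
have jn : index b n < size n by rewrite index_mem.
have Hdvd : gcd_seq (take (index b n) n) %| b.
  rewrite -(nth_index 0 bn) in AY hd.
  by rewrite -{2}(nth_index 0 bn); apply: gcd_prefix_dvd An AY hd.
have j0 : 0 < index b n.
  rewrite lt0n; apply: contraTneq Hdvd => ->.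
  by rewrite take0 dvd0n -lt0n (proj1 (Hn b bn)).
apply: (Hstr (index b n)); first by rewrite j0.
by apply/esym/gcd_take_succ; rewrite ?nth_index.
Qed.

Theorem proposition44 (F : nat) (n : seq nat) :
  0 < F -> 1 <= size n -> sorted ltn n ->
  (forall x, x \in n -> 0 < x /\ x < F) ->
  ~~ (gcd_seq n %| F) ->
  (minimal_Sat_system F (fun x => x \in n) <->
   (forall i, 1 <= i <= size n - 1 -> gcd_seq (take i n) <> gcd_seq (take i.+1 n))).
Proof.
move=> _ sz Hs Hn Hg; have Hpos x (xn : x \in n) : 0 < x by case: (Hn x xn).
have range i : (1 <= i <= size n - 1) = (0 < i < size n).
  by apply/andP/andP => -[h1 h2]; split; move: h1 h2 sz; clear; lia.
split=> [Hmin i | Hstr].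
  by rewrite range; apply: (minimal_strict_gcd Hs Hpos Hmin).
have {}Hstr i : 0 < i < size n -> gcd_seq (take i n) <> gcd_seq (take i.+1 n).
  by rewrite -range; apply: Hstr.
split.
  split=> [x /Hn [x0 xF] | ]; first by split; [move: x0; clear; lia | exact: ltnW].
  exists (SA F (fun x => x \in n)); split; last by move=> x; apply: SA_sub.
  exact: (SA_inSat_sub (n := n)).
move=> Y HYX HnXY Heqv; apply: HnXY => b bn; apply: NNPP => nYb.
apply: (missing_generator_outside_hull Hs Hn Hg Hstr HYX bn nYb).
by apply/Heqv => S _; apply.
Qed.
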